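(* Let $d\ge k\ge1$, $A\in\mathbb{R}^{d\times k}$ with $A^TA=I_k$, $\beta\in(0,1)$, $\theta^*=\sqrt{1-\beta}\,AA^T$, and let $\delta\in\mathbb{R}^{d\times d}$ and $\hat\theta:=\theta^*+\sqrt{1-\beta}\,\delta$. Let $m\in\{0,1\}^d$ and assume $\hat\lambda_{\max}:=\|(AA^T+\delta)D(m)\|<1$. Let $x_0$ be in the column space of $A$ and $x_1\in\mathbb{R}^d$ arbitrary. Define $$x_0^{(0)}=AA^Tx_1,\qquad x_0^{(r)}=\tfrac{1}{\sqrt{1-\beta}}\hat\theta\big(D(m)\,x_0^{(r-1)}+D(\mathbf 1-m)\,x_0\big)\quad(r\ge1).$$ Then for every $r\ge0$, $$\|x_0^{(r)}-x_0\|\le\hat\lambda_{\max}^r\left(\frac{\|\theta^*\|\,\|x_1-x_0\|}{\sqrt{1-\beta}}+\frac{\|\hat\theta-\theta^*\|\,\|x_0\|}{(1-\hat\lambda_{\max})\sqrt{1-\beta}}\right)+\frac{\|\hat\theta-\theta^*\|\,\|x_0\|}{(1-\hat\lambda_{\max})\sqrt{1-\beta}}.$$ *)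

From HB Require Import structures.
From mathcomp Require Import all_boot all_order all_algebra.
From mathcomp Require Import classical_sets reals.
Set Implicit Arguments. Unset Strict Implicit. Unset Printing Implicit Defensive.
Import Order.TTheory GRing.Theory Num.Theory.
Local Open Scope ring_scope.
Local Open Scope classical_set_scope.

Definition vnorm (R : realType) (n : nat) (v : 'cV[R]_n) : R :=
  Num.sqrt (\sum_(i < n) v i 0 ^+ 2).

Definition opnorm (R : realType) (p q : nat) (M : 'M[R]_(p, q)) : R :=
  sup [set vnorm (M *m v) | v in [set v : 'cV[R]_q | vnorm v <= 1]].

Definition Dmask (R : realType) (d : nat) (m : 'I_d -> bool) : 'M[R]_d :=
  diag_mx (\row_i (m i)%:R).

Definition Dcomask (R : realType) (d : nat) (m : 'I_d -> bool) : 'M[R]_d :=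
  diag_mx (\row_i (1 - (m i)%:R)).

Definition theta_star (R : realType) (d k : nat) (A : 'M[R]_(d, k)) (beta : R)
  : 'M[R]_d := Num.sqrt (1 - beta) *: (A *m A^T).

Definition theta_hat (R : realType) (d k : nat) (A : 'M[R]_(d, k)) (beta : R)
  (delta : 'M[R]_d) : 'M[R]_d :=
  theta_star A beta + Num.sqrt (1 - beta) *: delta.

Fixpoint iterate (R : realType) (d k : nat) (A : 'M[R]_(d, k)) (beta : R)
  (delta : 'M[R]_d) (m : 'I_d -> bool) (x0 x1 : 'cV[R]_d) (r : nat) : 'cV[R]_d :=
  match r with
  | 0 => A *m A^T *m x1
  | r'.+1 => (Num.sqrt (1 - beta))^-1 *:
       (theta_hat A beta delta *m
         (Dmask R m *m iterate A beta delta m x0 x1 r' + Dcomask R m *m x0))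
  end.

From HB Require Import structures.
From mathcomp Require Import all_boot all_order all_algebra.
From mathcomp Require Import classical_sets reals.
From mathcomp Require Import ring lra.
Import Order.TTheory GRing.Theory Num.Theory.
Local Open Scope ring_scope.

(* Since [A A^T x0 = x0] and [D(m) + D(1-m) = I], the error [e_r = x0^(r) - x0]
   obeys the affine recursion [e_(r+1) = (A A^T + delta) D(m) e_r + delta x0].
   Hence [|e_(r+1)| <= lam |e_r| + |delta x0|], where
   [|delta x0| <= |theta_hat - theta_star| |x0| / s = (1 - lam) E], and
   [e_0 = A A^T (x1 - x0) = theta_star (x1 - x0) / s].  Unrolling a recursion
   [u_(r+1) <= lam u_r + (1 - lam) E] gives [u_r <= lam^r (u_0 + E) + E]. *)

Section EuclideanNorm.
Context {R : realType} {n : nat}.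
Implicit Types u v : 'cV[R]_n.

Definition dot u v : R := \sum_(i < n) u i 0 * v i 0.

Lemma dotC u v : dot u v = dot v u.
Proof. by apply: eq_bigr => i _; rewrite mulrC. Qed.

Lemma dotDl u w v : dot (u + w) v = dot u v + dot w v.
Proof. by rewrite /dot -big_split; apply: eq_bigr => i _; rewrite mxE mulrDl. Qed.

Lemma dot_ge0 v : 0 <= dot v v.
Proof. by apply: sumr_ge0 => i _; rewrite -expr2 sqr_ge0. Qed.

Lemma vnormE v : vnorm v = Num.sqrt (dot v v).
Proof.
by rewrite /vnorm /dot; congr Num.sqrt; apply: eq_bigr => i _; rewrite expr2.
Qed.

Lemma vnorm_ge0 v : 0 <= vnorm v.
Proof. exact: sqrtr_ge0. Qed.

Lemma vnorm_sqr v : vnorm v ^+ 2 = dot v v.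
Proof. by rewrite vnormE sqr_sqrtr // dot_ge0. Qed.

Lemma dot_scalerB (a b : R) u v :
  dot (a *: u - b *: v) (a *: u - b *: v)
  = a ^+ 2 * dot u u - 2 * a * b * dot u v + b ^+ 2 * dot v v.
Proof.
rewrite /dot !mulr_sumr -!sumrB -big_split /=; apply: eq_bigr => i _.
by rewrite !mxE; ring.
Qed.

Lemma cauchy_schwarz u v : dot u v ^+ 2 <= dot u u * dot v v.
Proof.
have [vv0|vv_neq0] := eqVneq (dot v v) 0.
  have v0 i : v i 0 = 0.
    move/eqP: vv0; rewrite psumr_eq0 => [/allP/(_ i (mem_index_enum _))|j _].
      by rewrite -expr2 sqrf_eq0 => /eqP.
    by rewrite -expr2 sqr_ge0.
  have -> : dot u v = 0 by rewrite /dot big1 // => i _; rewrite v0 mulr0.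
  by rewrite expr0n mulr_ge0 ?dot_ge0.
have vv_gt0 : 0 < dot v v by rewrite lt0r vv_neq0 dot_ge0.
(* expand [0 <= |<v,v> u - <u,v> v|^2] and divide by [<v,v>] *)
have := dot_ge0 (dot v v *: u - dot u v *: v); rewrite dot_scalerB => h.
have : 0 <= dot v v * (dot u u * dot v v - dot u v ^+ 2) by nra.
by rewrite pmulr_rge0 // subr_ge0.
Qed.

Lemma dot_le_vnorm u v : dot u v <= vnorm u * vnorm v.
Proof.
have norm_dot : `|dot u v| <= vnorm u * vnorm v.
  rewrite -ler_sqr ?nnegrE ?mulr_ge0 ?vnorm_ge0 // real_normK ?num_real //.
  by rewrite exprMn !vnorm_sqr cauchy_schwarz.
exact: le_trans (ler_norm _) norm_dot.
Qed.

Lemma vnormD u v : vnorm (u + v) <= vnorm u + vnorm v.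
Proof.
rewrite -ler_sqr ?nnegrE ?addr_ge0 ?vnorm_ge0 //.
rewrite vnorm_sqr dotDl !(dotC _ (u + v)) !dotDl -!vnorm_sqr (dotC v u).
have := vnorm_ge0 u; have := vnorm_ge0 v; have := dot_le_vnorm u v.
nra.
Qed.

Lemma vnormZ (a : R) v : vnorm (a *: v) = `|a| * vnorm v.
Proof.
rewrite /vnorm -sqrtr_sqr -sqrtrM ?sqr_ge0 // mulr_sumr.
by congr Num.sqrt; apply: eq_bigr => i _; rewrite mxE exprMn.
Qed.

Lemma vnorm0 : vnorm (0 : 'cV[R]_n) = 0.
Proof. by rewrite /vnorm big1 ?sqrtr0 // => i _; rewrite mxE expr0n. Qed.

Lemma normr_coord_le_vnorm v i : `|v i 0| <= vnorm v.
Proof.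
rewrite vnormE -sqrtr_sqr; apply: ler_wsqrtr.
rewrite /dot (bigD1 i) //= -expr2 lerDl.
by apply: sumr_ge0 => j _; rewrite -expr2 sqr_ge0.
Qed.

Lemma vnorm_eq0 v : vnorm v = 0 -> v = 0.
Proof.
move=> v0; apply/matrixP => i j; rewrite (ord1 j) mxE; apply/eqP.
by rewrite -normr_eq0 eq_le normr_ge0 andbT -v0 normr_coord_le_vnorm.
Qed.

End EuclideanNorm.

Section OperatorNorm.
Local Open Scope classical_set_scope.
Context {R : realType} {p q : nat} (M : 'M[R]_(p, q)).

Lemma opnorm_bounded :
  has_ubound [set vnorm (M *m v) | v in [set v : 'cV[R]_q | vnorm v <= 1]].
Proof.
exists (Num.sqrt (\sum_(i < p) (\sum_(j < q) `|M i j|) ^+ 2)).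
move=> _ [v /= v_le1 <-]; apply: ler_wsqrtr; apply: ler_sum => i _.
rewrite mxE -real_normK ?num_real //.
rewrite lerXn2r ?nnegrE ?sumr_ge0 //.
apply: le_trans (ler_norm_sum _ _ _) _; apply: ler_sum => j _.
rewrite normrM -[leRHS]mulr1 ler_wpM2l //.
exact: le_trans (normr_coord_le_vnorm _ _) v_le1.
Qed.

Lemma opnorm_ge0 : 0 <= opnorm M.
Proof.
rewrite /opnorm -(@vnorm0 R p); apply: (ub_le_sup opnorm_bounded).
exists 0; last by rewrite mulmx0.
by rewrite /= vnorm0 ler01.
Qed.

Lemma vnorm_mulmx_le v : vnorm (M *m v) <= opnorm M * vnorm v.
Proof.
have [v0|v_neq0] := eqVneq (vnorm v) 0.
  by rewrite v0 mulr0 (vnorm_eq0 _ v0) mulmx0 vnorm0.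
have v_gt0 : 0 < vnorm v by rewrite lt0r v_neq0 vnorm_ge0.
have normalize w : vnorm ((vnorm v)^-1 *: w) = vnorm w / vnorm v.
  by rewrite vnormZ ger0_norm ?invr_ge0 ?vnorm_ge0 // mulrC.
have unit_v : vnorm ((vnorm v)^-1 *: v) <= 1 by rewrite normalize divff.
have := ub_le_sup opnorm_bounded
  (ex_intro2 _ _ ((vnorm v)^-1 *: v) unit_v erefl).
by rewrite -scalemxAr normalize ler_pdivrMr.
Qed.

Lemma vnorm_scale_mulmx_le (s : R) v :
  0 < s -> vnorm (s^-1 *: (M *m v)) <= opnorm M * vnorm v / s.
Proof.
move=> s_gt0; rewrite vnormZ ger0_norm ?invr_ge0 ?(ltW s_gt0) // mulrC.
by rewrite ler_pM2r ?invr_gt0 // vnorm_mulmx_le.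
Qed.

End OperatorNorm.

Lemma Dmask_add_Dcomask (R : realType) {d : nat} (m : 'I_d -> bool) :
  Dmask R m + Dcomask R m = 1%:M.
Proof. by apply/matrixP => i j; rewrite !mxE -mulrnDl addrC subrK. Qed.

Lemma affine_contraction_bound (R : realType) (lam E B : R) (u : nat -> R) :
  0 <= lam -> 0 <= E -> u 0%N <= B ->
  (forall r, u r.+1 <= lam * u r + (1 - lam) * E) ->
  forall r, u r <= lam ^+ r * (B + E) + E.
Proof.
move=> lam_ge0 E_ge0 u0 uS; elim=> [|r IH]; first by rewrite expr0 mul1r; lra.
apply: le_trans (uS r) _; rewrite exprS.
by have := ler_wpM2l lam_ge0 IH; lra.
Qed.

Section Iterates.
Variables (R : realType) (d k : nat) (A : 'M[R]_(d, k)) (beta : R).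
Variables (delta : 'M[R]_d) (m : 'I_d -> bool) (x0 x1 : 'cV[R]_d).
Hypothesis s_neq0 : Num.sqrt (1 - beta) != 0.
Hypothesis proj_x0 : A *m A^T *m x0 = x0.

Lemma theta_hat_subE :
  theta_hat A beta delta - theta_star A beta = Num.sqrt (1 - beta) *: delta.
Proof. by rewrite /theta_hat addrAC subrr add0r. Qed.

Lemma iterate0_sub :
  iterate A beta delta m x0 x1 0 - x0
  = (Num.sqrt (1 - beta))^-1 *: (theta_star A beta *m (x1 - x0)).
Proof.
by rewrite /= -{1}proj_x0 -mulmxBr /theta_star -scalemxAl scalerA mulVf ?scale1r.
Qed.

Lemma iterateS_sub r :
  iterate A beta delta m x0 x1 r.+1 - x0
  = (A *m A^T + delta) *m Dmask R m *m (iterate A beta delta m x0 x1 r - x0)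
    + delta *m x0.
Proof.
rewrite /= /theta_hat /theta_star -scalerDr -scalemxAl scalerA mulVf // scale1r.
have -> : Dcomask R m *m x0 = x0 - Dmask R m *m x0.
  by rewrite -{2}[x0]mul1mx -(Dmask_add_Dcomask R m) mulmxDl addrAC subrr add0r.
rewrite addrCA -mulmxBr mulmxDr mulmxA [(A *m A^T + delta) *m x0]mulmxDl proj_x0.
by rewrite addrAC (addrC x0) addrK addrC.
Qed.

End Iterates.

Theorem theorem3 (R : realType) (d k : nat) (hk1 : (1 <= k)%N) (hkd : (k <= d)%N)
  (A : 'M[R]_(d, k)) (hA : A^T *m A = 1%:M)
  (beta : R) (hb0 : 0 < beta) (hb1 : beta < 1)
  (delta : 'M[R]_d) (m : 'I_d -> bool)
  (hlam : opnorm ((A *m A^T + delta) *m Dmask R m) < 1)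
  (x0 x1 : 'cV[R]_d) (hx0 : exists y : 'cV[R]_k, x0 = A *m y) :
  let lam := opnorm ((A *m A^T + delta) *m Dmask R m) in
  let s := Num.sqrt (1 - beta) in
  let E := opnorm (theta_hat A beta delta - theta_star A beta) * vnorm x0
           / ((1 - lam) * s) in
  forall r : nat,
    vnorm (iterate A beta delta m x0 x1 r - x0)
    <= lam ^+ r * (opnorm (theta_star A beta) * vnorm (x1 - x0) / s + E) + E.
Proof.
move=> lam s E.
have s_gt0 : 0 < s by rewrite sqrtr_gt0 subr_gt0.
have proj_x0 : A *m A^T *m x0 = x0.
  by case: hx0 => y ->; rewrite -!mulmxA (mulmxA A^T) hA mul1mx.
have delta_x0 : vnorm (delta *m x0) <= (1 - lam) * E.
  have -> : (1 - lam) * E = opnorm (theta_hat A beta delta - theta_star A beta)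
                             * vnorm x0 / s.
    by rewrite /E; field; rewrite !gt_eqF ?subr_gt0.
  suff -> : delta *m x0
            = s^-1 *: ((theta_hat A beta delta - theta_star A beta) *m x0).
    exact: vnorm_scale_mulmx_le.
  by rewrite theta_hat_subE -scalemxAl scalerA mulVf ?gt_eqF ?scale1r.
have E_ge0 : 0 <= E.
  by rewrite divr_ge0 ?mulr_ge0 ?opnorm_ge0 ?vnorm_ge0 ?subr_ge0 ?ltW.
apply: affine_contraction_bound (opnorm_ge0 _) E_ge0 _ _.
  by rewrite iterate0_sub ?gt_eqF // vnorm_scale_mulmx_le.
move=> r; rewrite iterateS_sub ?gt_eqF //.
by apply: le_trans (vnormD _ _) _; rewrite lerD ?vnorm_mulmx_le.
Qed.
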